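(* For every $k\ge 1$ and every collection $\Omega$ of functions, $$\rho_1\bigl(\mathsf{vwl}_k^{(\infty)}\bigr)=\rho_1\bigl(\mathsf{TL}_{k+1}(\Omega)\bigr).$$
   Context: Fix integers $n\ge 1$ and $\ell\ge 1$. A graph is a triple $G=(V_G,E_G,\mathrm{col}_G)$ with $V_G=[n]=\{1,\dots,n\}$, $E_G$ a set of unordered pairs of distinct vertices (undirected, no loops), and a vertex labelling $\mathrm{col}_G:V_G\to\mathbb R^\ell$; $N_G(v)=\{u:uv\in E_G\}$. Let $\mathcal G=\mathcal G_0$ be the set of all such graphs and, for $s\ge 1$, $\mathcal G_s=\{(G,\mathbf v):G\in\mathcal G,\ \mathbf v\in V_G^s\}$. Tensor language $\mathsf{TL}(\Omega)$: let $\Omega$ be a collection of functions, each of the form $f:\mathbb R^p\to\mathbb R$ for some $p\ge1$ depending on $f$. Expressions are generated by $\varphi::=\mathbf 1_{x=y}\mid \mathbf 1_{x\neq y}\mid E(x,y)\mid P_s(x)\mid \varphi\cdot\varphi\mid \varphi+\varphi\mid a\cdot\varphi\mid f(\varphi_1,\dots,\varphi_p)\mid \sum_x\varphi$, with $x,y$ index variables, $s\in[\ell]$, $a\in\mathbb R$, $f\in\Omega$ of arity $p$. Free variables: $\mathrm{free}(\mathbf 1_{x\,\mathrm{op}\,y})=\mathrm{free}(E(x,y))=\{x,y\}$, $\mathrm{free}(P_s(x))=\{x\}$; for $\varphi_1\cdot\varphi_2$, $\varphi_1+\varphi_2$, $f(\varphi_1,\dots,\varphi_p)$ the union of the components' free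 variables; $\mathrm{free}(a\cdot\varphi)=\mathrm{free}(\varphi)$; $\mathrm{free}(\sum_x\varphi)=\mathrm{free}(\varphi)\setminus\{x\}$. Semantics: for a graph $G$ and a valuation $\nu$ mapping variables to $V_G$: $[\![E(x,y)]\!]^\nu_G=1$ if $\nu(x)\nu(y)\in E_G$ and $0$ otherwise; $[\![P_s(x)]\!]^\nu_G=\mathrm{col}_G(\nu(x))_s$; $[\![\mathbf 1_{x\,\mathrm{op}\,y}]\!]^\nu_G=1$ if $\nu(x)\,\mathrm{op}\,\nu(y)$ and $0$ otherwise; $\cdot$, $+$, scalar multiplication and $f$ act on the values of the components; $[\![\sum_x\varphi]\!]^\nu_G=\sum_{v\in V_G}[\![\varphi]\!]^{\nu[x\mapsto v]}_G$. For $\varphi$ with free variables among $x_1,\dots,x_s$ and $\mathbf v\in V_G^s$, $[\![\varphi]\!]^{\mathbf v}_G$ denotes the value under $x_i\mapsto v_i$. Summation depth $\mathrm{sd}$: $0$ for atoms, maximum over the components for $\cdot$, $+$, $f(\dots)$, $\mathrm{sd}(a\cdot\varphi)=\mathrm{sd}(\varphi)$, $\mathrm{sd}(\sum_x\varphi)=\mathrm{sd}(\varphi)+1$. $\mathsf{TL}_k(\Omega)$ is the set of expressions in which only variables from $\{x_1,\dots,x_k\}$ occur (free or bound; variables may be re-bound), and $\mathsf{TL}_k^{(t)}(\Omega)$ its subset of summation depth at most $t$. Separation power: for a set $\mathcal F$ of functions $f:\mathcal G_s\to\mathbb R^{m_f}$, $\rho_s(\mathcal F)=\{((G,\mathbf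 v),(H,\mathbf w))\in\mathcal G_s\times\mathcal G_s: f(G,\mathbf v)=f(H,\mathbf w)\ \forall f\in\mathcal F\}$ (for $s=0$, pairs of graphs), and $\rho_s(f)=\rho_s(\{f\})$. For a set $\mathcal L$ of expressions, $\rho_s(\mathcal L)$ is the set of pairs with $[\![\varphi]\!]^{\mathbf v}_G=[\![\varphi]\!]^{\mathbf w}_H$ for all $\varphi\in\mathcal L$ whose free variables are among $x_1,\dots,x_s$ (for $s=0$: all closed expressions in $\mathcal L$). $k$-dimensional Weisfeiler–Leman ($k\ge1$): for $\mathbf v\in V_G^k$, the atomic type $\mathsf{atp}_k(G,\mathbf v)$ records, for all $1\le i<j\le k$, whether $v_i=v_j$ and whether $v_iv_j\in E_G$, together with $\mathrm{col}_G(v_i)$ for all $i\in[k]$. Set $\mathsf{wl}_k^{(0)}(G,\mathbf v)=\mathsf{atp}_k(G,\mathbf v)$ and $\mathsf{wl}_k^{(t+1)}(G,\mathbf v)=\bigl(\mathsf{wl}_k^{(t)}(G,\mathbf v),\{\!\{(\mathsf{atp}_{k+1}(G,(v_1,\dots,v_k,u)),\mathsf{wl}_k^{(t)}(G,\mathbf v[u/1]),\dots,\mathsf{wl}_k^{(t)}(G,\mathbf v[u/k])):u\in V_G\}\!\}\bigr)$, where $\mathbf v[u/i]$ replaces the $i$-th entry of $\mathbf v$ by $u$ and $\{\!\{\cdot\}\!\}$ denotes a multiset. Labels are compared as formal objects across graphs. $\mathsf{vwl}_k^{(t)}(G,v)=\mathsf{wl}_k^{(t)}(G,(v,\dots,v))$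 and $\mathsf{gwl}_k^{(t)}(G)=\{\!\{\mathsf{wl}_k^{(t)}(G,\mathbf v):\mathbf v\in V_G^k\}\!\}$. $\rho_1(\mathsf{vwl}_k^{(t)})$ is the set of pairs $((G,v),(H,w))$ with $\mathsf{vwl}_k^{(t)}(G,v)=\mathsf{vwl}_k^{(t)}(H,w)$, and $\rho_1(\mathsf{vwl}_k^{(\infty)})=\bigcap_{t\ge0}\rho_1(\mathsf{vwl}_k^{(t)})$ (the stable labelling). *)

From Stdlib Require Import Reals.
From mathcomp Require Import all_boot.

Set Implicit Arguments.
Unset Strict Implicit.
Unset Printing Implicit Defensive.

(* E_G is a set of unordered pairs of distinct vertices: encoded as a
   symmetric irreflexive boolean relation on 'I_n. *)
Record graph (n l : nat) := Graph {
  adj : rel 'I_n;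
  adj_sym : forall u v, adj u v = adj v u;
  adj_irr : forall u, adj u u = false;
  col : 'I_n -> 'I_l -> R
}.

(* Omega is given as an indexed family: index type I, arity ar o (>= 1,
   imposed in the theorem), and the function F o : R^(ar o) -> R.
   Expressions of TL_m(Omega) use only the variables x_1..x_m, represented
   by 'I_m (x_{j+1} is the ordinal j); labels P_s with s in [l] use 'I_l. *)
Section TL.
Variables (I : Type) (ar : I -> nat) (l : nat).

Inductive expr (m : nat) : Type :=
| EEq    : 'I_m -> 'I_m -> expr m
| ENeq   : 'I_m -> 'I_m -> expr m
| EEdge  : 'I_m -> 'I_m -> expr m
| ELab   : 'I_l -> 'I_m -> expr m
| EMul   : expr m -> expr m -> expr m
| EAdd   : expr m -> expr m -> expr m
| EScale : R -> expr m -> expr m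
| EApp   : forall o : I, ('I_(ar o) -> expr m) -> expr m
| ESum   : 'I_m -> expr m -> expr m.

Fixpoint freeb m (e : expr m) (z : 'I_m) : bool :=
  match e with
  | EEq x y | ENeq x y | EEdge x y => (z == x) || (z == y)
  | ELab _ x => z == x
  | EMul a b | EAdd a b => freeb a z || freeb b z
  | EScale _ a => freeb a z
  | EApp o args => [exists j : 'I_(ar o), freeb (args j) z]
  | ESum x a => (z != x) && freeb a z
  end.

Variable F : forall o : I, ('I_(ar o) -> R) -> R.

Definition upd n m (nu : 'I_m -> 'I_n) (x : 'I_m) (v : 'I_n) : 'I_m -> 'I_n :=
  fun z => if z == x then v else nu z.

Fixpoint eval n m (G : graph n l) (e : expr m) (nu : 'I_m -> 'I_n) : R :=
  match e with
  | EEq x y => if nu x == nu y then R1 else R0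
  | ENeq x y => if nu x != nu y then R1 else R0
  | EEdge x y => if adj G (nu x) (nu y) then R1 else R0
  | ELab s x => col G (nu x) s
  | EMul a b => Rmult (eval G a nu) (eval G b nu)
  | EAdd a b => Rplus (eval G a nu) (eval G b nu)
  | EScale c a => Rmult c (eval G a nu)
  | EApp o args => F (fun j => eval G (args j) nu)
  | ESum x a => \big[Rplus/R0]_(v : 'I_n) eval G a (upd nu x v)
  end.

End TL.

Section WL.
Variables (n l : nat).

Definition atp k (G : graph n l) (v : 'I_k -> 'I_n) :
  {ffun 'I_k * 'I_k -> bool * bool} * {ffun 'I_k -> {ffun 'I_l -> R}} :=
  ([ffun ij : 'I_k * 'I_k =>
      if (ij.1 < ij.2)%N then (v ij.1 == v ij.2, adj G (v ij.1) (v ij.2))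
      else (false, false)],
   [ffun i => [ffun s => col G (v i) s]]).

Definition snoc k (v : 'I_k -> 'I_n) (u : 'I_n) : 'I_k.+1 -> 'I_n :=
  fun i => if (insub (nat_of_ord i) : option 'I_k) is Some j then v j else u.

Definition repl k (v : 'I_k -> 'I_n) (i : 'I_k) (u : 'I_n) : 'I_k -> 'I_n :=
  fun j => if j == i then u else v j.

(* wl_eq k t G v H w  <->  wl_k^(t)(G,v) = wl_k^(t)(H,w).
   Equality of the multisets {{ (atp_{k+1}(G,vu), wl^(t)(G,v[u/1]),...,
   wl^(t)(G,v[u/k])) : u in V_G }} is unfolded literally: there is a
   bijection sigma : V_G -> V_H matching each element u with an element
   sigma u carrying the same label. *)
Fixpoint wl_eq k (t : nat) (G : graph n l) (v : 'I_k -> 'I_n)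
    (H : graph n l) (w : 'I_k -> 'I_n) : Prop :=
  match t with
  | 0 => atp G v = atp H w
  | t'.+1 =>
      wl_eq t' G v H w /\
      exists sigma : 'I_n -> 'I_n, bijective sigma /\
        forall u : 'I_n,
          atp G (snoc v u) = atp H (snoc w (sigma u)) /\
          forall i : 'I_k, wl_eq t' G (repl v i u) H (repl w i (sigma u))
  end.

(* ((G,v),(H,w)) in rho_1(vwl_k^(infinity)) *)
Definition vwl_inf_eq k (G : graph n l) (v : 'I_n) (H : graph n l) (w : 'I_n) : Prop :=
  forall t, wl_eq t G (fun _ : 'I_k => v) H (fun _ : 'I_k => w).

End WL.

(* ((G,v),(H,w)) in rho_1(TL_m(Omega)): all expressions whose free variables
   are among {x_1} (= ord0) agree, evaluated with x_1 |-> v (resp. w).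
   The valuation sends every variable to v; only x_1 is free, so this is
   the value [[phi]]^v_G. *)
Definition TL_eq (I : Type) (ar : I -> nat) (F : forall o : I, ('I_(ar o) -> R) -> R)
    (n l m : nat) (G : graph n l) (v : 'I_n) (H : graph n l) (w : 'I_n) : Prop :=
  forall e : expr ar l m.+1,
    (forall z, freeb e z -> z == ord0) ->
    eval F G e (fun _ => v) = eval F H e (fun _ => w).

(* Call two (k+1)-tuples t-agreeing when they
   have the same atomic type and every injective k-subtuple of theirs gets the same k-WL
   colour after t rounds.  For a summation over a variable x, one refinement round on the
   k-subtuple omitting x provides a bijection of vertices under which the updated tuples are
   (t-1)-agreeing; hence t-agreeing valuations give equal values to all expressions of
   summation depth at most t.  Constant tuples agree for every t.

   For a fixed pair of graphs, the indicator of
   "same t-round colour as a given k-tuple" is definable in TL_{k+1}, without using Omega.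
   Atomic types are tested with 1_{x=y}, E and Lagrange polynomials in P_s over the finitely
   many colour values of the two graphs.  A refinement round amounts to equal numbers of
   neighbours of each of the finitely many neighbour types; such a number is a sum over the
   (k+1)-st variable and is again tested by interpolation, on {0,...,n}.  Equal counts for
   every type give the bijection demanded by the definition of [wl_eq]. *)

From HB Require Import structures.
From Stdlib Require Import Reals Lra ClassicalEpsilon FunctionalExtensionality.
From mathcomp Require Import all_boot perm.

Set Implicit Arguments.
Unset Strict Implicit.
Unset Printing Implicit Defensive.

HB.instance Definition _ := Monoid.isComLaw.Build R R0 Rplus
  (fun x y z => esym (Rplus_assoc x y z)) Rplus_comm Rplus_0_l.

Definition Req_bool (x y : R) : bool := if Req_EM_T x y then true else false.

Lemma Req_boolP : Equality.axiom Req_bool.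
Proof. by move=> x y; rewrite /Req_bool; case: Req_EM_T => h; constructor. Qed.

HB.instance Definition _ := hasDecEq.Build R Req_boolP.

Definition asbool (P : Prop) : bool := if excluded_middle_informative P then true else false.

Lemma asboolP (P : Prop) : reflect P (asbool P).
Proof. by rewrite /asbool; case: excluded_middle_informative => h; constructor. Qed.

Lemma asbool_eq (T : eqType) (x y : T) : asbool (x = y) = (x == y).
Proof. exact/asboolP/eqP. Qed.

Notation ind b := (if b then R1 else R0).

Lemma ind_mul (a b : bool) : Rmult (ind a) (ind b) = ind (a && b).
Proof. by case: a; case: b => /=; ring. Qed.

Lemma INR_eqE (x y : nat) : (INR x == INR y) = (x == y).
Proof. by apply/eqP/eqP => [/INR_eq|->]. Qed.

Lemma sum_ind (T : finType) (p : pred T) : \big[Rplus/R0]_(u : T) ind (p u) = INR #|p|.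
Proof.
rewrite -sum1_card (big_morph INR (id1 := R0) (op1 := Rplus)) //; last exact: plus_INR.
by rewrite [RHS]big_mkcond.
Qed.

Lemma finfunK (aT : finType) (rT : Type) (f : aT -> rT) : fun_of_fin (finfun f) = f.
Proof. by apply: functional_extensionality => x; rewrite ffunE. Qed.

Lemma card_count (T : finType) (p : pred T) : #|p| = count p (enum T).
Proof. by rewrite cardE -size_filter enumT. Qed.

Lemma card_preim_bij (T : finType) (p : pred T) (s : T -> T) : bijective s ->
  #|[pred u | p (s u)]| = #|p|.
Proof. by move=> bij_s; rewrite -!sum1_card [RHS](reindex_inj (bij_inj bij_s)). Qed.

Section ClassCounting.
Variables (Z : finType) (eqv : rel Z).
Hypotheses (eqv_refl : reflexive eqv) (eqv_sym : symmetric eqv) (eqv_trans : transitive eqv).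

Definition class_rep (z : Z) : Z := nth z (enum Z) (find (eqv^~ z) (enum Z)).

Lemma class_repP z : eqv (class_rep z) z.
Proof. by apply: (@nth_find _ z (eqv^~ z)); apply/hasP; exists z; rewrite ?mem_enum. Qed.

Lemma class_rep_eq x y : eqv x y -> class_rep x = class_rep y.
Proof.
move=> xy; rewrite /class_rep (@eq_find _ _ (eqv^~ y)) => [|r /=]; last first.
  by apply/idP/idP => rz; apply: eqv_trans rz _; rewrite // eqv_sym.
by rewrite (set_nth_default y) // -has_find; apply/hasP; exists y; rewrite ?mem_enum.
Qed.

Lemma count_class_rep n (f : 'I_n -> Z) r :
  count_mem r [seq class_rep (f u) | u <- enum 'I_n] =
  if class_rep r == r then #|[pred u | eqv r (f u)]| else 0.
Proof.
rewrite count_map -card_count; case: eqP => [rep_r|rep_r].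
  apply: eq_card => u /=; apply/eqP/idP => [<-|r_fu]; first exact: class_repP.
  by rewrite -(class_rep_eq r_fu).
apply: eq_card0 => u /=; apply/eqP => rep_fu; apply: rep_r.
by rewrite -rep_fu; apply: class_rep_eq; apply: class_repP.
Qed.

Lemma bij_of_class_cards n (f1 f2 : 'I_n -> Z) :
  (forall r, #|[pred u | eqv r (f1 u)]| = #|[pred u | eqv r (f2 u)]|) ->
  exists s : 'I_n -> 'I_n, bijective s /\ forall u, eqv (f1 u) (f2 (s u)).
Proof.
move=> eq_cards.
have : perm_eq [seq class_rep (f1 u) | u <- enum 'I_n] [tuple class_rep (f2 u) | u < n].
  by apply/allP => r _; rewrite /= !count_class_rep eq_cards.
case/tuple_permP => p eq_reps.
have rep_p u : class_rep (f1 u) = class_rep (f2 (p u)).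
  have : u \in enum 'I_n by rewrite mem_enum.
  by move: u; apply/eq_in_map; rewrite eq_reps /=; apply: eq_map => u; rewrite tnth_mktuple.
exists p; split=> [|u]; first exact: injF_bij (@perm_inj _ p).
apply: (@eqv_trans (class_rep (f1 u))); first by rewrite eqv_sym class_repP.
by rewrite rep_p class_repP.
Qed.

End ClassCounting.

Section AtomicTypes.
Variables (n l : nat).
Implicit Types (X Y : graph n l).

Definition atp_agree m X (a : 'I_m -> 'I_n) Y (b : 'I_m -> 'I_n) :=
  (forall i j, (a i == a j) = (b i == b j) /\ adj X (a i) (a j) = adj Y (b i) (b j)) /\
  (forall i s, col X (a i) s = col Y (b i) s).

Lemma atpE m X (a : 'I_m -> 'I_n) Y b : atp X a = atp Y b <-> atp_agree X a Y b.
Proof.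
split=> [[eq_adj eq_col]|[agree_ij agree_col]]; last first.
  congr pair; apply/ffunP => x; rewrite !ffunE.
    by case: ifP => // _; have [-> ->] := agree_ij x.1 x.2.
  by apply/ffunP => s; rewrite !ffunE agree_col.
have lt_agree (i j : 'I_m) : (i < j)%N ->
    (a i == a j) = (b i == b j) /\ adj X (a i) (a j) = adj Y (b i) (b j).
  by move=> lt_ij; move/ffunP: eq_adj => /(_ (i, j)); rewrite !ffunE /= lt_ij => -[-> ->].
split=> [i j|i s]; last by move/ffunP: eq_col => /(_ i) /ffunP /(_ s); rewrite !ffunE.
case: (ltngtP i j) => [/lt_agree //|/lt_agree [eq_ji adj_ji]|/val_inj ->].
  by rewrite eq_sym eq_ji eq_sym adj_sym adj_ji adj_sym.
by rewrite !eqxx !adj_irr.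
Qed.

Lemma atp_agree_comp m m' X (a : 'I_m -> 'I_n) Y b (p : 'I_m' -> 'I_m) :
  atp_agree X a Y b -> atp_agree X (a \o p) Y (b \o p).
Proof. by move=> [agree_ij agree_col]; split=> [i j|i s]; [apply: agree_ij|apply: agree_col]. Qed.

Variable k : nat.
Notation wl_eq := (@wl_eq n l k).

Lemma wl_eq_refl t X a : wl_eq t X a X a.
Proof. by elim: t a => [|t IH] a //=; split=> //; exists id; split=> //; exists id. Qed.

Lemma wl_eq_sym t X a Y b : wl_eq t X a Y b -> wl_eq t Y b X a.
Proof.
elim: t a b => [|t IH] a b /=; first by move->.
move=> [eq_t [s [[s' sK s'K] match_s]]]; split; first exact: IH.
exists s'; split; first exact: Bijective s'K sK.
move=> u; have [eq_u match_i] := match_s (s' u); rewrite s'K in eq_u match_i.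
by split=> [|i]; [rewrite eq_u|apply: IH].
Qed.

Lemma wl_eq_trans t X a Y b Z c : wl_eq t X a Y b -> wl_eq t Y b Z c -> wl_eq t X a Z c.
Proof.
elim: t a b c => [|t IH] a b c /=; first by move=> -> ->.
move=> [eq_ab [s [bij_s match_s]]] [eq_bc [s' [bij_s' match_s']]].
split; first exact: IH eq_ab eq_bc.
exists (s' \o s); split; first exact: bij_comp.
move=> u; have [-> match_i] := match_s u; have [-> match_i'] := match_s' (s u).
by split=> // i; apply: IH (match_i i) (match_i' i).
Qed.

Definition snoc_perm (p : 'I_k -> 'I_k) (i : 'I_k.+1) : 'I_k.+1 :=
  if (insub (nat_of_ord i) : option 'I_k) is Some j then widen_ord (leqnSn k) (p j) else ord_max.

Lemma snoc_comp_perm (a : 'I_k -> 'I_n) u (p : 'I_k -> 'I_k) :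
  snoc (a \o p) u = snoc a u \o snoc_perm p.
Proof.
apply: functional_extensionality => i; rewrite /snoc /snoc_perm /=.
case: insubP => [j _ _|_] /=; last by rewrite insubF //= ltnn.
by rewrite insubT ?ltn_ord // => lt_pj; congr a; apply: val_inj.
Qed.

Lemma repl_comp_perm (a : 'I_k -> 'I_n) i u (p : 'I_k -> 'I_k) : injective p ->
  repl (a \o p) i u = repl a (p i) u \o p.
Proof.
by move=> p_inj; apply: functional_extensionality => j; rewrite /repl /= (inj_eq p_inj).
Qed.

Lemma wl_eq_perm t X a Y b (p : 'I_k -> 'I_k) : injective p ->
  wl_eq t X a Y b -> wl_eq t X (a \o p) Y (b \o p).
Proof.
move=> p_inj; elim: t a b => [|t IH] a b /=.
  by move/atpE => agree_ab; apply/atpE; apply: atp_agree_comp.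
move=> [eq_ab [s [bij_s match_s]]]; split; first exact: IH.
exists s; split=> // u; have [eq_snoc match_i] := match_s u; split.
  rewrite (snoc_comp_perm a u p) (snoc_comp_perm b (s u) p).
  by apply/atpE/atp_agree_comp/atpE.
by move=> i; rewrite (repl_comp_perm a) // (repl_comp_perm b) //; apply: IH.
Qed.

End AtomicTypes.

Definition fresh k (f : 'I_k -> 'I_k.+1) : 'I_k.+1 := odflt ord_max [pick c | c \notin codom f].

Lemma fresh_neq k (f : 'I_k -> 'I_k.+1) i : injective f -> f i != fresh f.
Proof.
move=> f_inj; rewrite /fresh; case: pickP => [c /= fc|all_in].
  by apply: contraNneq fc => <-; rewrite codom_f.
suff : (#|'I_k.+1| <= #|codom f|)%N by rewrite card_codom // !card_ord ltnn.
by apply/subset_leq_card/subsetP => c _; move/negbFE: (all_in c).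
Qed.

Section Subtuples.
Variables (n k : nat).
Implicit Types (c : 'I_k.+1 -> 'I_n) (p : 'I_k -> 'I_k.+1).

Definition move_last (j z : 'I_k.+1) : 'I_k.+1 :=
  if unlift j z is Some i then widen_ord (leqnSn k) i else ord_max.

Lemma upd_snoc c j v : upd c j v = snoc (c \o lift j) v \o move_last j.
Proof.
apply: functional_extensionality => z; rewrite /upd /move_last /snoc /=.
case: unliftP => [i ->|->]; last by rewrite eqxx insubF //= ltnn.
rewrite eq_sym (negbTE (neq_lift _ _)) insubT ?ltn_ord //= => lt_ik.
by congr (c (lift j _)); apply: val_inj.
Qed.

Lemma upd_comp_avoid c j v p : (forall i, p i != j) -> upd c j v \o p = c \o p.
Proof.
by move=> p_avoid; apply: functional_extensionality => z; rewrite /upd /= (negbTE (p_avoid z)).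
Qed.

(* [i'] is the position of [c \o lift j] missed by [p]; [q] sends [p^-1 j] to it. *)
Lemma upd_comp_hit j p i0 : injective p -> p i0 = j ->
  exists i' (q : 'I_k -> 'I_k), injective q /\
    forall c v, upd c j v \o p = repl (c \o lift j) i' v \o q.
Proof.
move=> p_inj pi0; have fresh_p z : p z != fresh p by apply: fresh_neq.
case: (unliftP j (fresh p)) => [i' fresh_lift|fresh_j]; last first.
  by move: (fresh_p i0); rewrite pi0 fresh_j eqxx.
pose q z := if unlift j (p z) is Some w then w else i'.
have qi0 : q i0 = i' by rewrite /q pi0 unlift_none.
have lift_q z : z != i0 -> lift j (q z) = p z.
  rewrite /q; case: (unliftP j (p z)) => [w //|pz_j].
  by rewrite -(inj_eq p_inj) pi0 pz_j eqxx.
have q_neq z : z != i0 -> q z != i'.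
  move=> z_i0; apply: contra (fresh_p z) => /eqP qz.
  by rewrite -(lift_q _ z_i0) qz fresh_lift.
exists i', q; split=> [z1 z2|c v].
  case: (eqVneq z1 i0) => [->|z1_i0]; case: (eqVneq z2 i0) => [->|z2_i0] //.
  - by rewrite qi0 => /esym/eqP; rewrite (negbTE (q_neq _ z2_i0)).
  - by rewrite qi0 => /eqP; rewrite (negbTE (q_neq _ z1_i0)).
  - by move=> eq_q; apply: p_inj; rewrite -(lift_q _ z1_i0) -(lift_q _ z2_i0) eq_q.
apply: functional_extensionality => z; rewrite /upd /repl /=.
case: (eqVneq z i0) => [->|z_i0]; first by rewrite pi0 eqxx qi0 eqxx.
by rewrite (negbTE (q_neq _ z_i0)) lift_q // -pi0 (inj_eq p_inj) (negbTE z_i0).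
Qed.

Lemma comp_snoc c p z : c \o snoc p z = snoc (c \o p) (c z).
Proof. by apply: functional_extensionality => i; rewrite /snoc /=; case: insub. Qed.

Lemma comp_repl c p i z : c \o repl p i z = repl (c \o p) i (c z).
Proof. by apply: functional_extensionality => j; rewrite /repl /=; case: eqP. Qed.

Lemma repl_fresh_inj p i : injective p -> injective (repl p i (fresh p)).
Proof.
move=> p_inj x y; rewrite /repl.
case: (eqVneq x i) => [->|x_i]; case: (eqVneq y i) => [->|y_i] //.
- by move=> fy; case/eqP: (fresh_neq y p_inj).
- by move=> fx; case/eqP: (fresh_neq x p_inj).
- exact: p_inj.
Qed.

End Subtuples.

Fixpoint sdepth (I : Type) (ar : I -> nat) l m (e : expr ar l m) : nat :=
  match e with
  | EEq _ _ | ENeq _ _ | EEdge _ _ | ELab _ _ => 0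
  | EMul a b | EAdd a b => maxn (sdepth a) (sdepth b)
  | EScale _ a => sdepth a
  | EApp o args => \max_(j < ar o) sdepth (args j)
  | ESum _ a => (sdepth a).+1
  end.

Section WLRefinesTL.
Variables (n l k : nat) (I : Type) (ar : I -> nat) (F : forall o : I, ('I_(ar o) -> R) -> R).
Variables (G H : graph n l).
Notation wl_eq := (@wl_eq n l k).

Definition wl_agree t (nu mu : 'I_k.+1 -> 'I_n) :=
  atp_agree G nu H mu /\
  forall p : 'I_k -> 'I_k.+1, injective p -> wl_eq t G (nu \o p) H (mu \o p).

Lemma wl_agree_sum t nu mu j : wl_agree t.+1 nu mu ->
  exists s : 'I_n -> 'I_n, bijective s /\ forall u, wl_agree t (upd nu j u) (upd mu j (s u)).
Proof.
move=> [agree_nm wl_nm]; have [_ [s [bij_s match_s]]] := wl_nm _ (@lift_inj _ j).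
exists s; split=> // u; have [eq_snoc match_i] := match_s u; split.
  by rewrite !upd_snoc; apply/atp_agree_comp/atpE.
move=> p p_inj; case: (boolP [exists i, p i == j]) => [/existsP [i0 /eqP pi0]|p_avoid].
  have [i' [q [q_inj upd_p]]] := upd_comp_hit n p_inj pi0.
  by rewrite !upd_p; apply: wl_eq_perm q_inj (match_i i').
have {}p_avoid i : p i != j by move: p_avoid; rewrite negb_exists => /forallP.
by rewrite !upd_comp_avoid //; case: (wl_nm p p_inj).
Qed.

Lemma eval_wl_agree (e : expr ar l k.+1) t nu mu : (sdepth e <= t)%N ->
  wl_agree t nu mu -> eval F G e nu = eval F H e mu.
Proof.
elim: e t nu mu => [x y|x y|x y|s x|e1 IH1 e2 IH2|e1 IH1 e2 IH2|r e IH|o args IH|x e IH]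
  t nu mu /=;
  [| | | |rewrite geq_max => /andP [le1 le2]|rewrite geq_max => /andP [le1 le2]|move=> le_t..].
- by move=> _ [[agree_ij _] _]; have [-> _] := agree_ij x y.
- by move=> _ [[agree_ij _] _]; have [-> _] := agree_ij x y.
- by move=> _ [[agree_ij _] _]; have [_ ->] := agree_ij x y.
- by move=> _ [[_ agree_col] _]; rewrite agree_col.
- by move=> agree_nm; rewrite (IH1 t nu mu) ?(IH2 t nu mu).
- by move=> agree_nm; rewrite (IH1 t nu mu) ?(IH2 t nu mu).
- by move=> agree_nm; rewrite (IH t nu mu).
- move=> agree_nm; congr F; apply: functional_extensionality => j.
  by apply: (IH j t) => //; apply: leq_trans le_t; apply: leq_bigmax.
- case: t le_t => // t le_t /(wl_agree_sum x) [s [bij_s agree_s]].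
  rewrite [RHS](reindex_inj (bij_inj bij_s)) /=.
  by apply: eq_bigr => u _; apply: IH (agree_s u).
Qed.

End WLRefinesTL.

Section TestExpressions.
Variables (I : Type) (ar : I -> nat) (l m : nat) (F : forall o : I, ('I_(ar o) -> R) -> R).
Variable n : nat.
Notation expr := (expr ar l m.+1).
Implicit Types (X : graph n l) (nu : 'I_m.+1 -> 'I_n) (e : expr).

Lemma eval_ESum X x e nu :
  eval F X (ESum x e) nu = \big[Rplus/R0]_(v : 'I_n) eval F X e (upd nu x v).
Proof. by []. Qed.

Lemma eval_EMul X e1 e2 nu : eval F X (EMul e1 e2) nu = Rmult (eval F X e1 nu) (eval F X e2 nu).
Proof. by []. Qed.

Definition one_expr : expr := EEq ar l ord0 ord0.

Definition prod_expr (s : seq expr) : expr := foldr (@EMul _ ar l _) one_expr s.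

Definition bool_test e (b : bool) : expr := if b then e else EAdd one_expr (EScale (-1) e).

(* Lagrange interpolation: [1] at [c], [0] at the other points of [L]. *)
Definition eq_test (c : R) (L : seq R) e : expr :=
  prod_expr [seq EScale (/ (c - d)) (EAdd e (EScale (- d) one_expr)) | d <- L & d != c].

Lemma eval_prod_ind (A : Type) X nu (es : A -> expr) (P : pred A) (s : seq A) :
  (forall x, eval F X (es x) nu = ind (P x)) ->
  eval F X (prod_expr (map es s)) nu = ind (all P s).
Proof. by move=> es_ind; elim: s => [|x s IH] /=; rewrite ?eqxx // IH es_ind ind_mul. Qed.

Lemma eval_bool_test X nu e (b b' : bool) :
  eval F X e nu = ind b -> eval F X (bool_test e b') nu = ind (b == b').
Proof.
by rewrite /bool_test => e_ind; case: b'; rewrite /= ?e_ind ?eqxx; case: b {e_ind} => /=; ring.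
Qed.

Lemma eval_eq_test X nu c L e : eval F X e nu \in L ->
  eval F X (eq_test c L e) nu = ind (eval F X e nu == c).
Proof.
rewrite /eq_test; set x := eval F X e nu.
case: eqP => [x_c|x_neq_c] x_in.
  elim: L {x_in} => [|d L IH] /=; first by rewrite eqxx.
  case: eqP => [//|d_neq_c] /=; rewrite IH eqxx -/x x_c; field.
  by move=> cd; apply: d_neq_c; lra.
elim: L x_in => [//|d L IH]; rewrite in_cons => /predU1P [x_d|x_in] /=.
  case: eqP => [d_c|_] /=; first by case: x_neq_c; rewrite x_d.
  by rewrite eqxx -/x x_d; ring.
by case: eqP => _ /=; rewrite ?IH //; ring.
Qed.

Variable cols : 'I_l -> seq R.

Definition atp_test r X' (c : 'I_r -> 'I_n) (g : 'I_r -> 'I_m.+1) : expr :=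
  EMul (prod_expr [seq EMul (bool_test (EEq ar l (g ij.1) (g ij.2)) (c ij.1 == c ij.2))
                            (bool_test (EEdge ar l (g ij.1) (g ij.2)) (adj X' (c ij.1) (c ij.2)))
                  | ij <- enum {: 'I_r * 'I_r}])
       (prod_expr [seq eq_test (col X' (c js.1) js.2) (cols js.2) (ELab ar js.2 (g js.1))
                  | js <- enum {: 'I_r * 'I_l}]).

Lemma eval_atp_test r X' (c : 'I_r -> 'I_n) g X nu :
  (forall u s, col X u s \in cols s) ->
  eval F X (atp_test X' c g) nu = ind (atp X' c == atp X (nu \o g)).
Proof.
move=> cols_X; rewrite /atp_test [eval _ _ (EMul _ _) _]/=.
rewrite (eval_prod_ind (P := fun ij : 'I_r * 'I_r =>
   ((nu (g ij.1) == nu (g ij.2)) == (c ij.1 == c ij.2)) &&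
   (adj X (nu (g ij.1)) (nu (g ij.2)) == adj X' (c ij.1) (c ij.2)))); last first.
  by move=> ij /=; rewrite -ind_mul; congr Rmult; apply: eval_bool_test.
rewrite (eval_prod_ind (P := fun js : 'I_r * 'I_l =>
   col X (nu (g js.1)) js.2 == col X' (c js.1) js.2)); last first.
  by move=> [i s]; rewrite eval_eq_test //; apply: cols_X.
rewrite ind_mul; congr (if _ then _ else _).
apply/idP/eqP => [/andP [/allP agree_ij /allP agree_col]|/atpE [agree_ij agree_col]].
  apply/atpE; split=> [i j|i s].
    by have /andP [/eqP -> /eqP ->] := agree_ij (i, j) (mem_enum _ _).
  by have /eqP -> := agree_col (i, s) (mem_enum _ _).
apply/andP; split; apply/allP => -[i j] _ /=.
  by have [-> ->] := agree_ij i j; rewrite !eqxx.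
by rewrite agree_col.
Qed.

Definition close_expr e (xs : seq 'I_m.+1) : expr :=
  foldr (fun x acc => ESum x (EMul (EEq ar l ord0 x) acc)) e xs.

Lemma eval_close_expr X e xs v : all (fun x => x != ord0) xs ->
  eval F X (close_expr e xs) (fun _ => v) = eval F X e (fun _ => v).
Proof.
elim: xs => [//|x xs IH] /= /andP [x_neq0 xs_neq0].
have upd_v : upd (fun _ => v) x v = (fun _ => v).
  by apply: functional_extensionality => z; rewrite /upd; case: ifP.
rewrite (big_only1 v) // => [|u u_neq_v _]; first by rewrite upd_v /= eqxx IH //; ring.
rewrite /= /upd eqxx [ord0 == x]eq_sym (negbTE x_neq0).
by case: eqP => [u_v|_]; [case/eqP: u_neq_v|ring].
Qed.

Lemma freeb_close_expr e xs z : freeb (close_expr e xs) z -> (z == ord0) || (z \notin xs).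
Proof.
elim: xs => [|x xs IH] /=; first by rewrite orbT.
case/andP => z_x /orP [/orP [-> //|/eqP z_eq_x]|/IH]; first by case/eqP: z_x.
by rewrite in_cons negb_or z_x.
Qed.

End TestExpressions.

Arguments prod_expr : simpl never.
Arguments eq_test : simpl never.
Arguments atp_test : simpl never.

Section WLExpressible.
Variables (n l k : nat) (I : Type) (ar : I -> nat) (F : forall o : I, ('I_(ar o) -> R) -> R).
Variables (G H : graph n l).
Notation expr := (expr ar l k.+1).
Notation wl_eq := (@wl_eq n l k).

Definition gr (b : bool) := if b then G else H.

Definition cols (s : 'I_l) : seq R :=
  [seq col G u s | u <- enum 'I_n] ++ [seq col H u s | u <- enum 'I_n].

Lemma col_in_cols b u s : col (gr b) u s \in cols s.
Proof.
by rewrite mem_cat; case: b; apply/orP; [left|right]; apply: map_f; rewrite mem_enum.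
Qed.

(* [(b, a, u)] stands for the vertex [u] of [gr b], seen from the [k]-tuple [a]. *)
Notation nbr := (bool * {ffun 'I_k -> 'I_n} * 'I_n)%type.

Definition same_nbr t (T1 T2 : nbr) : bool :=
  let: (b1, a1, u1) := T1 in let: (b2, a2, u2) := T2 in
  asbool (atp (gr b1) (snoc a1 u1) = atp (gr b2) (snoc a2 u2) /\
          forall i, wl_eq t (gr b1) (repl a1 i u1) (gr b2) (repl a2 i u2)).

Lemma same_nbr_refl t : reflexive (same_nbr t).
Proof. by move=> [[b a] u]; apply/asboolP; split=> // i; apply: wl_eq_refl. Qed.

Lemma same_nbr_sym t : symmetric (same_nbr t).
Proof.
move=> [[b1 a1] u1] [[b2 a2] u2] /=.
by apply/asboolP/asboolP => -[eq_atp eq_wl]; split=> // i; apply: wl_eq_sym.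
Qed.

Lemma same_nbr_trans t : transitive (same_nbr t).
Proof.
move=> [[b2 a2] u2] [[b1 a1] u1] [[b3 a3] u3] /asboolP [eq12 wl12] /asboolP [eq23 wl23].
by apply/asboolP; split=> [|i]; [rewrite eq12|apply: wl_eq_trans (wl12 i) (wl23 i)].
Qed.

Definition nbr_count t (T : nbr) b (a : 'I_k -> 'I_n) : nat :=
  #|[pred u | same_nbr t T (b, finfun a, u)]|.

Lemma wl_eq_succE t b0 a0 b a :
  wl_eq t.+1 (gr b0) a0 (gr b) a <->
  wl_eq t (gr b0) a0 (gr b) a /\ forall T, nbr_count t T b0 a0 = nbr_count t T b a.
Proof.
have same_nbrP u u' : same_nbr t (b0, finfun a0, u) (b, finfun a, u') <->
    atp (gr b0) (snoc a0 u) = atp (gr b) (snoc a u') /\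
    forall i, wl_eq t (gr b0) (repl a0 i u) (gr b) (repl a i u').
  by rewrite /= !finfunK; split=> /asboolP.
split=> [/= [eq_t [s [bij_s match_s]]]|[eq_t eq_counts] /=]; split=> //.
  move=> T; rewrite /nbr_count -[RHS](card_preim_bij _ bij_s).
  apply: eq_card => u; rewrite !inE.
  have /same_nbrP same_u := match_s u.
  apply/idP/idP => [T_u|T_su]; first exact: same_nbr_trans T_u same_u.
  by apply: same_nbr_trans T_su _; rewrite same_nbr_sym.
have [s [bij_s same_s]] := bij_of_class_cards (@same_nbr_refl t) (@same_nbr_sym t)
  (@same_nbr_trans t) (f1 := fun u => (b0, finfun a0, u)) (f2 := fun u => (b, finfun a, u))
  eq_counts.
by exists s; split=> // u; apply/same_nbrP.
Qed.

Local Notation test_family := (bool -> ('I_k -> 'I_n) -> ('I_k -> 'I_k.+1) -> expr).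

Definition expresses_wl t (test : test_family) :=
  forall b0 a0 f, injective f -> forall b nu,
    eval F (gr b) (test b0 a0 f) nu = ind (asbool (wl_eq t (gr b0) a0 (gr b) (nu \o f))).

Definition count_test (test : test_family) (T : nbr) (f : 'I_k -> 'I_k.+1) : expr :=
  let: (b, a, u) := T in
  ESum (fresh f) (EMul (atp_test ar cols (gr b) (snoc a u) (snoc f (fresh f)))
    (prod_expr [seq test b (repl a i u) (repl f i (fresh f)) | i <- enum 'I_k])).

Lemma eval_count_test t test T f b nu : expresses_wl t test -> injective f ->
  eval F (gr b) (count_test test T f) nu = INR (nbr_count t T b (nu \o f)).
Proof.
move=> test_wl f_inj; case: T => [[b1 a1] u1].
rewrite eval_ESum -sum_ind; apply: eq_bigr => u _; set z := fresh f.
have upd_f : upd nu z u \o f = nu \o f by apply: upd_comp_avoid => i; apply: fresh_neq.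
have upd_z : upd nu z u z = u by rewrite /upd eqxx.
rewrite eval_EMul eval_atp_test => [|u' s]; last exact: col_in_cols.
rewrite comp_snoc upd_f upd_z (eval_prod_ind (P := fun i =>
  asbool (wl_eq t (gr b1) (repl a1 i u1) (gr b) (repl (nu \o f) i u)))); last first.
  move=> i; rewrite test_wl; last exact: repl_fresh_inj.
  by rewrite comp_repl upd_f upd_z.
rewrite ind_mul inE /= finfunK; congr (if _ then _ else _).
apply/andP/asboolP => [[/eqP eq_atp /allP eq_wl]|[eq_atp eq_wl]].
  by split=> // i; apply/asboolP/eq_wl; rewrite mem_enum.
by split; [apply/eqP|apply/allP => i _; apply/asboolP].
Qed.

Definition count_values : seq R := [seq INR i | i <- iota 0 n.+1].

Lemma nbr_count_value t T b a : INR (nbr_count t T b a) \in count_values.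
Proof.
apply: map_f; rewrite mem_iota /= ltnS.
by apply: leq_trans (max_card _) _; rewrite card_ord.
Qed.

Fixpoint wl_test t b0 (a0 : 'I_k -> 'I_n) (f : 'I_k -> 'I_k.+1) : expr :=
  if t is t'.+1 then
    EMul (wl_test t' b0 a0 f)
      (prod_expr [seq eq_test (INR (nbr_count t' T b0 a0)) count_values
                              (count_test (wl_test t') T f) | T <- enum {: nbr}])
  else atp_test ar cols (gr b0) a0 f.

Lemma eval_wl_test t : expresses_wl t (wl_test t).
Proof.
elim: t => [|t IH] b0 a0 f f_inj b nu; rewrite [wl_test _ _ _ _]/=.
  by rewrite eval_atp_test ?asbool_eq // => u s; apply: col_in_cols.
rewrite eval_EMul IH //
  (eval_prod_ind (P := fun T => nbr_count t T b (nu \o f) == nbr_count t T b0 a0)); last first.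
  by move=> T; rewrite eval_eq_test (eval_count_test _ _ _ IH) ?INR_eqE ?nbr_count_value.
rewrite ind_mul; congr (if _ then _ else _).
apply/andP/asboolP => [[/asboolP eq_t /allP eq_counts]|/wl_eq_succE [eq_t eq_counts]].
  by apply/wl_eq_succE; split=> // T; apply/esym/eqP/eq_counts; rewrite mem_enum.
by split; [apply/asboolP|apply/allP => T _; apply/eqP/esym].
Qed.

End WLExpressible.

Lemma vwl_wl_agree n l k (G H : graph n l) v w : (1 <= k)%N ->
  vwl_inf_eq k G v H w -> forall t, wl_agree G H t (fun _ : 'I_k.+1 => v) (fun _ => w).
Proof.
move=> k_gt0 vwl_vw t; split=> [|p _]; last exact: vwl_vw.
have /atpE [_ agree_col] := vwl_vw 0.
by split=> [i j|i s]; rewrite /= ?eqxx ?adj_irr //; apply: (agree_col (Ordinal k_gt0)).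
Qed.

Lemma TL_eq_vwl n l k (I : Type) (ar : I -> nat) (F : forall o : I, ('I_(ar o) -> R) -> R)
    (G H : graph n l) v w :
  TL_eq F k G v H w -> vwl_inf_eq k G v H w.
Proof.
move=> tl_vw t; set f0 := widen_ord (leqnSn k).
have f0_inj : injective f0 by move=> x y /(congr1 val) /= /val_inj.
set xs := [seq x <- enum 'I_k.+1 | x != ord0].
have xs_neq0 : all (fun x => x != ord0) xs by apply/allP => x; rewrite mem_filter => /andP [].
set test := wl_test ar G H t true (fun _ => v) f0.
have test_closed z : freeb (close_expr test xs) z -> z == ord0.
  by move/freeb_close_expr; rewrite mem_filter mem_enum andbT negbK orbb.
have := tl_vw _ test_closed; rewrite !eval_close_expr //.
rewrite (eval_wl_test F G H t true _ f0_inj true) (eval_wl_test F G H t true _ f0_inj false) /=.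
case: asboolP => [_|]; last by case; apply: wl_eq_refl.
by case: asboolP => // _ /R1_neq_R0.
Qed.

Theorem theorem1 (n l : nat) (hn : (1 <= n)%N) (hl : (1 <= l)%N) (k : nat) (hk : (1 <= k)%N)
  (I : Type) (ar : I -> nat) (har : forall o, (0 < ar o)%N)
  (F : forall o : I, ('I_(ar o) -> R) -> R) :
  forall (G H : graph n l) (v w : 'I_n),
    vwl_inf_eq k G v H w <-> TL_eq F k G v H w.
Proof.
move=> G H v w; split=> [vwl_vw e _|]; last exact: TL_eq_vwl.
exact: eval_wl_agree (leqnn _) (vwl_wl_agree hk vwl_vw _).
Qed.
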